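(* Suppose $a\in C^2(\mathbb{R})$. Let $\tilde\alpha=(\tilde\alpha_1,\tilde\alpha_2)\in\mathbb{R}^2$ be such that $a'(\tilde\alpha_2)>0$. Given $s_0,t_0>0$ sufficiently small depending on the function $a$ and $\tilde\alpha_2$, there exists $0<\epsilon_0<1$ depending on the function $a$, $\tilde\alpha_2$, $s_0$ and $t_0$ such that, for all $\epsilon\leq \epsilon_0$, there exists a collection of weights $\{[\gamma^{\epsilon}]_j\}_{j=0}^4 \subset \mathbb{R}_{+}$ with $\sum_{j=1}^{4}[\gamma^{\epsilon}]_j=\epsilon$ and $[\gamma^{\epsilon}]_0=1-\epsilon$ such that \begin{equation*} \mu^{\epsilon}:=\sum_{j=0}^{4} [\gamma^{\epsilon}]_j\delta_{\zeta_j} \in \mathcal{M}^{pc}(\mathcal{K}^{\tilde\alpha}_1). \end{equation*}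
   Context: Let $a:\mathbb{R}\to\mathbb{R}$ and let $F(\xi)=\int_0^\xi a(s)\,ds$. For $\alpha\in\mathbb{R}^2$ define $$P_1^{\alpha}(u,v):=\begin{pmatrix} u-\alpha_1 & v-\alpha_2 \\ a(v)-a(\alpha_2) & u-\alpha_1\\ (u-\alpha_1)(a(v)-a(\alpha_2)) & \frac{(u-\alpha_1)^2}{2}+F(v)-F(\alpha_2)-a(\alpha_2)(v-\alpha_2) \end{pmatrix}$$ and $\mathcal{K}^{\alpha}_1:=\{P_1^{\alpha}(u,v):u,v\in\mathbb{R}\}\subset M^{3\times 2}$. For a set $\mathcal{K}$ of matrices, $\mathcal{M}^{pc}(\mathcal{K})$ denotes the set of probability measures $\mu$ supported on $\mathcal{K}$ such that $\int M(X)\,d\mu(X)=M\left(\int X\,d\mu(X)\right)$ for every minor $M$ (Null Lagrangian measures). Given $s_0,t_0>0$, set $\zeta_0:=P_1^{\tilde\alpha}(\tilde\alpha_1,\tilde\alpha_2)=0$, $\zeta_1:=P_1^{\tilde\alpha}(\tilde\alpha_1+s_0,\tilde\alpha_2)$, $\zeta_2:=P_1^{\tilde\alpha}(\tilde\alpha_1-s_0,\tilde\alpha_2)$, $\zeta_3:=P_1^{\tilde\alpha}(\tilde\alpha_1,\tilde\alpha_2+t_0)$, $\zeta_4:=P_1^{\tilde\alpha}(\tilde\alpha_1,\tilde\alpha_2-t_0)$. *)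

From Stdlib Require Import Reals.
From Coquelicot Require Import Coquelicot.
From mathcomp Require Import all_boot all_order all_algebra.
From mathcomp Require Import Rstruct.

Set Implicit Arguments.
Unset Strict Implicit.
Unset Printing Implicit Defensive.

Import GRing.Theory Num.Theory.
Local Open Scope ring_scope.

Definition C2 (a : R -> R) : Prop :=
  (forall x, ex_derive a x) /\
  (forall x, ex_derive (Derive a) x) /\
  (forall x, continuous (Derive (Derive a)) x).

Definition Fprim (a : R -> R) (xi : R) : R := RInt a 0%R xi.

Definition P1 (a : R -> R) (al1 al2 : R) (u v : R) : 'M[R]_(3, 2) :=
  \matrix_(i < 3, j < 2)
    match nat_of_ord i, nat_of_ord j with
    | 0%N, 0%N => u - al1
    | 0%N, _   => v - al2
    | 1%N, 0%N => a v - a al2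
    | 1%N, _   => u - al1
    | _,   0%N => (u - al1) * (a v - a al2)
    | _,   _   => (u - al1) ^+ 2 / 2 + Fprim a v - Fprim a al2
                   - a al2 * (v - al2)
    end.

Definition K1 (a : R -> R) (al1 al2 : R) (X : 'M[R]_(3, 2)) : Prop :=
  exists u v, X = P1 a al1 al2 u v.

Definition minor (k : nat) (f : 'I_k -> 'I_3) (g : 'I_k -> 'I_2)
  (X : 'M[R]_(3, 2)) : R := \det (mxsub f g X).

Definition incr_idx (k m : nat) (f : 'I_k -> 'I_m) : Prop :=
  forall i j : 'I_k, (i < j)%N -> (f i < f j)%N.

(* The discrete measure  mu = sum_{j<n} gamma_j delta_{zeta_j}  belongs to
   M^pc(K): it is a probability measure (nonnegative weights summing to 1)
   supported on K, and int M dmu = M(int X dmu) for every minor M. *)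
Definition pc_discrete (K : 'M[R]_(3, 2) -> Prop) (n : nat)
  (gamma : 'I_n -> R) (zeta : 'I_n -> 'M[R]_(3, 2)) : Prop :=
  (forall j, 0 <= gamma j) /\
  \sum_(j < n) gamma j = 1 /\
  (forall j, 0 < gamma j -> K (zeta j)) /\
  (forall (k : nat) (f : 'I_k -> 'I_3) (g : 'I_k -> 'I_2),
      (1 <= k <= 2)%N -> incr_idx f -> incr_idx g ->
      \sum_(j < n) gamma j * minor f g (zeta j)
      = minor f g (\sum_(j < n) gamma j *: zeta j)).

Definition zetas (a : R -> R) (al1 al2 s0 t0 : R) (j : 'I_5) : 'M[R]_(3, 2) :=
  match nat_of_ord j with
  | 0%N => P1 a al1 al2 al1 al2
  | 1%N => P1 a al1 al2 (al1 + s0) al2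
  | 2%N => P1 a al1 al2 (al1 - s0) al2
  | 3%N => P1 a al1 al2 al1 (al2 + t0)
  | _   => P1 a al1 al2 al1 (al2 - t0)
  end.

From Stdlib Require Import Reals Lra Psatz.
From Coquelicot Require Import Coquelicot.
From mathcomp Require Import all_boot all_order all_algebra.
From mathcomp Require Import Rstruct.

(* Write c1 = a(al2 + t0) - a(al2), c2 = a(al2) - a(al2 - t0) and g1, g2 for the
   second-order Taylor remainders of F at al2 +- t0; all four are positive for small
   t0 because a'(al2) > 0.  With masses 1 - eps, m/2, m/2, p, q at zeta_0, ..., zeta_4,
   the minor conditions are automatic except for the 2x2 minors of rows (0,1) and
   (1,2), which are the two [moment_equations] (with s2 = s0^2, t = t0).
   Writing q = l p, the first one together with m + p + q = eps is a quadratic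
   equation for p, whose small root is an O(eps) perturbation of the solution at
   eps = 0; substituting it, the second one becomes [defect l = 0], an O(eps)
   perturbation of l c2 g2 = c1 g1.  For small eps the defect changes sign on
   [r/2, 2r] with r = c1 g1 / (c2 g2), and the intermediate value theorem gives l. *)

Section RealAnalysis.
Local Open Scope R_scope.

(* The root of [A x^2 - B x + C] that tends to [C / B] as [A] goes to 0, in a form
   valid also for [A = 0] and [A < 0]. *)
Definition small_root (A B C : R) : R := 2 * C / (B + sqrt (B ^ 2 - 4 * A * C)).

Lemma small_root_denom_pos A B C : 0 < B -> 0 < B + sqrt (B ^ 2 - 4 * A * C).
Proof. have := sqrt_pos (B ^ 2 - 4 * A * C); lra. Qed.

Lemma small_root_eq A B C : 0 < B -> 0 <= B ^ 2 - 4 * A * C ->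
  A * small_root A B C ^ 2 - B * small_root A B C + C = 0.
Proof.
move=> B_pos disc_ge0.
have den := small_root_denom_pos A B C B_pos.
have sq := sqrt_sqrt _ disc_ge0.
rewrite /small_root.
set D := sqrt _ in den sq *.
field_simplify_eq; [|lra].
rewrite (_ : D ^ 2 = D * D); [rewrite sq; ring | ring].
Qed.

Lemma small_root_pos A B C : 0 < B -> 0 < C -> 0 < small_root A B C.
Proof.
move=> B_pos C_pos.
apply Rdiv_lt_0_compat; [lra | exact: small_root_denom_pos].
Qed.

Lemma small_root_le A B C : 0 < B -> 0 <= C -> small_root A B C <= 2 * C / B.
Proof.
move=> B_pos C_ge0; apply Rmult_le_compat_l; [lra|].
apply Rinv_le_contravar; [lra|]; have := sqrt_pos (B ^ 2 - 4 * A * C); lra.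
Qed.

Definition moment_equations (c1 c2 g1 g2 s2 t m p q : R) : Prop :=
  m * s2 - t * (p * c1 + q * c2) = - t * (p - q) * (p * c1 - q * c2) /\
  p * c1 * g1 - q * c2 * g2 = (p * c1 - q * c2) * (m * s2 / 2 + p * g1 + q * g2).

Section MomentEquations.
Variables c1 c2 g1 g2 s2 t : R.
Hypotheses (c1_pos : 0 < c1) (c2_pos : 0 < c2) (g1_pos : 0 < g1) (g2_pos : 0 < g2).
Hypotheses (s2_pos : 0 < s2) (t_pos : 0 < t).

Definition balanced_ratio : R := c1 * g1 / (c2 * g2).

Lemma balanced_ratio_pos : 0 < balanced_ratio.
Proof. apply Rdiv_lt_0_compat; nra. Qed.

Lemma balanced_ratioE : balanced_ratio * (c2 * g2) = c1 * g1.
Proof. rewrite /balanced_ratio; field; nra. Qed.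

Definition ratio_max : R := 2 * balanced_ratio.
Definition bound_a : R := (1 + ratio_max) * (c1 + ratio_max * c2).
Definition bound_mean : R := (c1 + ratio_max * c2) * (s2 / 2 + 2 * (g1 + ratio_max * g2)).

Section FixedMass.
Variable eps : R.

Definition quad_a (l : R) : R := eps * t * ((1 - l) * (c1 - l * c2)).
Definition quad_b (l : R) : R := s2 * (1 + l) + t * (c1 + l * c2).
Definition p_weight (l : R) : R := small_root (quad_a l) (quad_b l) s2.
Definition m_weight (l : R) : R := 1 - p_weight l * (1 + l).
Definition defect (l : R) : R :=
  l * c2 * g2 - c1 * g1 + eps * (c1 - l * c2) * (m_weight l * s2 / 2 + p_weight l * (g1 + l * g2)).

Lemma moment_equations_of_defect_root l :
  0 < quad_b l -> 0 <= quad_b l ^ 2 - 4 * quad_a l * s2 -> defect l = 0 ->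
  moment_equations c1 c2 g1 g2 s2 t (eps * m_weight l) (eps * p_weight l) (eps * (l * p_weight l)).
Proof.
move=> b_pos disc_ge0 root.
have quad := small_root_eq _ _ _ b_pos disc_ge0.
rewrite -/(p_weight l) /quad_a /quad_b in quad.
rewrite /defect /m_weight in root *.
split.
- apply Rminus_diag_uniq; rewrite -[0](Rmult_0_r eps) -quad; ring.
- apply Rminus_diag_uniq; rewrite -[0](Rmult_0_r (- (eps * p_weight l))) -root; field.
Qed.

Hypothesis eps_pos : 0 < eps.
Hypothesis eps_disc : 4 * eps * t * bound_a < s2.
Hypothesis eps_mass : 2 * eps * bound_a < c1.
Hypothesis eps_defect : eps * bound_mean < c1 * g1 / 4.

Section InRange.
Variable l : R.
Hypothesis l_range : 0 <= l <= ratio_max.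

Lemma quad_a_small : Rabs (quad_a l) <= eps * t * bound_a.
Proof.
move: l_range balanced_ratio_pos; rewrite /quad_a /bound_a /ratio_max => lr r_pos.
rewrite !Rabs_mult (Rabs_pos_eq eps) ?(Rabs_pos_eq t); try lra.
apply Rmult_le_compat_l; [nra|].
apply Rmult_le_compat; try apply Rabs_pos; apply Rabs_le; nra.
Qed.

Lemma quad_b_ge : s2 <= quad_b l.
Proof.
have [l_ge0 _] := l_range.
have := Rmult_le_pos _ _ (Rlt_le _ _ s2_pos) l_ge0.
have := Rmult_le_pos _ _ (Rlt_le _ _ c2_pos) l_ge0.
rewrite /quad_b; nra.
Qed.

Lemma quad_b_pos : 0 < quad_b l.
Proof. have := quad_b_ge; lra. Qed.

Lemma quad_disc_pos : 0 < quad_b l ^ 2 - 4 * quad_a l * s2.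
Proof.
have a_small := Rle_trans _ _ _ (Rle_abs _) quad_a_small.
have b_ge := quad_b_ge.
nra.
Qed.

Lemma p_weight_pos : 0 < p_weight l.
Proof.
exact: small_root_pos quad_b_pos s2_pos.
Qed.

Lemma p_weight_le2 : p_weight l <= 2.
Proof.
have b_ge := quad_b_ge.
apply: Rle_trans (small_root_le _ _ _ quad_b_pos (Rlt_le _ _ s2_pos)) _.
apply Rmult_le_reg_r with (quad_b l); [lra|].
rewrite /Rdiv Rmult_assoc Rinv_l; lra.
Qed.

Lemma m_weight_pos : 0 < m_weight l.
Proof.
have quad := small_root_eq _ _ _ quad_b_pos (Rlt_le _ _ quad_disc_pos).
rewrite -/(p_weight l) in quad.
have P_pos := p_weight_pos; have P_le := p_weight_le2.
have aP_small : quad_a l * p_weight l <= eps * t * bound_a * 2.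
  apply: Rle_trans (Rmult_le_compat_r _ _ _ (Rlt_le _ _ P_pos) (Rle_abs _)) _.
  apply Rmult_le_compat; [apply Rabs_pos | lra | exact quad_a_small | exact P_le].
have m_weightE : s2 * m_weight l = p_weight l * (t * (c1 + l * c2) - quad_a l * p_weight l).
  rewrite /m_weight; rewrite /quad_b in quad; nra.
have tlc2 : 0 <= t * (l * c2).
  by apply Rmult_le_pos; [lra | apply Rmult_le_pos; lra].
have t_mass := Rmult_lt_compat_l t _ _ t_pos eps_mass.
have : 0 < s2 * m_weight l.
  rewrite m_weightE; apply Rmult_lt_0_compat; [exact P_pos | lra].
nra.
Qed.

Lemma m_weight_le1 : m_weight l <= 1.
Proof. have := p_weight_pos; rewrite /m_weight; nra. Qed.

Lemma defect_near : Rabs (defect l - (l * c2 * g2 - c1 * g1)) <= c1 * g1 / 4.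
Proof.
have P_pos := p_weight_pos; have P_le := p_weight_le2.
have M_pos := m_weight_pos; have M_le := m_weight_le1.
move: eps_defect l_range balanced_ratio_pos.
rewrite /defect /bound_mean /ratio_max => small lr r_pos.
rewrite (_ : forall x y, x + y - x = y); [|move=> *; ring].
have lc2 : 0 <= l * c2 <= 2 * balanced_ratio * c2 by split; nra.
have lg2 : 0 <= l * g2 <= 2 * balanced_ratio * g2 by split; nra.
have Ms2 : 0 <= m_weight l * s2 / 2 <= s2 / 2 by split; nra.
have Pg : 0 <= p_weight l * (g1 + l * g2) <= 2 * (g1 + 2 * balanced_ratio * g2) by split; nra.
rewrite !Rabs_mult (Rabs_pos_eq eps); [|lra].
apply: Rle_trans _ (Rlt_le _ _ small); rewrite Rmult_assoc.
apply Rmult_le_compat_l; [lra|].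
apply Rmult_le_compat; try apply Rabs_pos; apply Rabs_le; lra.
Qed.

Lemma defect_continuous : continuity_pt defect l.
Proof.
have a_derivable : forall x, ex_derive quad_a x by move=> x; rewrite /quad_a; auto_derive.
have b_derivable : forall x, ex_derive quad_b x by move=> x; rewrite /quad_b; auto_derive.
have disc := quad_disc_pos.
have den := small_root_denom_pos (quad_a l) (quad_b l) s2 quad_b_pos.
apply continuity_pt_filterlim, (ex_derive_continuous defect).
rewrite /defect /m_weight /p_weight /small_root.
auto_derive.
rewrite (_ : quad_b l * (quad_b l * 1) + - (4 * quad_a l * s2) = quad_b l ^ 2 - 4 * quad_a l * s2);
  [|ring].
repeat split; auto; lra.
Qed.

End InRange.

Lemma defect_root : exists l, 0 < l <= ratio_max /\ defect l = 0.
Proof.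
have r_pos := balanced_ratio_pos; have r_eq := balanced_ratioE.
have lo_range : 0 <= balanced_ratio / 2 <= ratio_max by rewrite /ratio_max; lra.
have hi_range : 0 <= ratio_max <= ratio_max by rewrite /ratio_max; lra.
have [l [l_range root]] : {l | balanced_ratio / 2 <= l <= ratio_max /\ defect l = 0}.
  apply Ranalysis5.IVT_interv.
  - move=> l l_range; apply defect_continuous; lra.
  - rewrite /ratio_max; lra.
  - have := proj1 (Rabs_le_between' _ _ _) (defect_near _ lo_range); nra.
  - have := proj1 (Rabs_le_between' _ _ _) (defect_near _ hi_range); rewrite /ratio_max; nra.
exists l; split; [lra | exact root].
Qed.

Lemma moment_equations_solvable_at : exists m p q,
  0 < m /\ 0 < p /\ 0 < q /\ m + p + q = eps /\ moment_equations c1 c2 g1 g2 s2 t m p q.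
Proof.
have [l [l_range root]] := defect_root.
have l_range' : 0 <= l <= ratio_max by lra.
exists (eps * m_weight l), (eps * p_weight l), (eps * (l * p_weight l)).
have P_pos := p_weight_pos _ l_range'.
split; first exact: Rmult_lt_0_compat (m_weight_pos _ l_range').
split; first exact: Rmult_lt_0_compat.
split; first by apply Rmult_lt_0_compat; nra.
split; first by rewrite /m_weight; ring.
exact: moment_equations_of_defect_root
  (quad_b_pos _ l_range') (Rlt_le _ _ (quad_disc_pos _ l_range')) root.
Qed.

End FixedMass.

Lemma bound_a_pos : 0 < bound_a.
Proof.
have := balanced_ratio_pos; rewrite /bound_a /ratio_max => r_pos.
apply Rmult_lt_0_compat; nra.
Qed.

Lemma bound_mean_pos : 0 < bound_mean.
Proof.
have := balanced_ratio_pos; rewrite /bound_mean /ratio_max => r_pos.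
apply Rmult_lt_0_compat; nra.
Qed.

Lemma moment_equations_solvable : exists eps0, 0 < eps0 < 1 /\
  forall eps, 0 < eps <= eps0 -> exists m p q,
    0 < m /\ 0 < p /\ 0 < q /\ m + p + q = eps /\ moment_equations c1 c2 g1 g2 s2 t m p q.
Proof.
have small x K c : 0 < K -> 0 < c -> x <= c / (2 * K) -> x * K < c.
  move=> K_pos c_pos x_le.
  apply: Rle_lt_trans (Rmult_le_compat_r _ _ _ (Rlt_le _ _ K_pos) x_le) _.
  rewrite (_ : c / (2 * K) * K = c / 2); [lra | field; lra].
have Ka := bound_a_pos; have Km := bound_mean_pos.
exists (Rmin (1 / 2) (Rmin (s2 / (2 * (4 * t * bound_a)))
         (Rmin (c1 / (2 * (2 * bound_a))) (c1 * g1 / 4 / (2 * bound_mean))))).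
split.
  split; [repeat apply Rmin_glb_lt; try apply Rdiv_lt_0_compat; nra|].
  apply: Rle_lt_trans (Rmin_l _ _) _; lra.
move=> eps [eps_pos eps_le].
have le_min x y z : x <= Rmin y z -> x <= y /\ x <= z.
  by move=> h; split; apply: Rle_trans h _; [apply Rmin_l | apply Rmin_r].
have [_ /le_min [eps_disc /le_min [eps_mass eps_defect]]] := le_min _ _ _ eps_le.
apply: moment_equations_solvable_at eps_pos _ _ _.
- suff : eps * (4 * t * bound_a) < s2 by lra.
  by apply: small => //; nra.
- suff : eps * (2 * bound_a) < c1 by lra.
  by apply: small => //; lra.
- by apply: small => //; nra.
Qed.

End MomentEquations.

Lemma Derive_pos_increasing_at (f : R -> R) x : ex_derive f x -> 0 < Derive f x ->
  exists delta : posreal,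
    (forall y, x < y < x + delta -> f x < f y) /\ (forall y, x - delta < y < x -> f y < f x).
Proof.
move=> f_der f'_pos.
have /is_derive_Reals lim := Derive_correct f x f_der.
have [delta slope] := lim _ f'_pos.
have slope_pos y : y <> x -> Rabs (y - x) < delta -> 0 < (f y - f x) / (y - x).
  move=> y_neq y_near; have := slope (y - x); rewrite (_ : x + (y - x) = y); [|ring].
  by move=> /(_ ltac:(lra) y_near) /Rabs_lt_between; lra.
exists delta; split=> y y_range.
- have /Rdiv_pos_cases := slope_pos y ltac:(lra) ltac:(rewrite Rabs_pos_eq; lra); lra.
- have /Rdiv_pos_cases := slope_pos y ltac:(lra) ltac:(rewrite Rabs_left; lra); lra.
Qed.

Lemma RInt_gt_const (f : R -> R) x y c : x < y ->
  (forall z, x <= z <= y -> continuous f z) -> (forall z, x < z < y -> c < f z) ->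
  c * (y - x) < RInt f x y.
Proof.
move=> xy f_cont f_gt.
have := RInt_lt (fun _ => c) f x y xy f_cont (fun z _ => continuous_const c z) f_gt.
rewrite RInt_const /scal /= /mult /=; lra.
Qed.

Lemma RInt_lt_const (f : R -> R) x y c : x < y ->
  (forall z, x <= z <= y -> continuous f z) -> (forall z, x < z < y -> f z < c) ->
  RInt f x y < c * (y - x).
Proof.
move=> xy f_cont f_lt.
have := RInt_lt f (fun _ => c) x y xy (fun z _ => continuous_const c z) f_cont f_lt.
rewrite RInt_const /scal /= /mult /=; lra.
Qed.

Lemma Fprim_sub (a : R -> R) u v : (forall x, continuous a x) ->
  Fprim a v - Fprim a u = RInt a u v.
Proof.
move=> a_cont.
have a_int y z : ex_RInt a y z by apply: ex_RInt_continuous => *; apply: a_cont.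
rewrite /Fprim -R0E -(RInt_Chasles a 0 u v) //; rewrite /plus /=; ring.
Qed.

Lemma increment_signs (a : R -> R) x0 : (forall x, ex_derive a x) -> 0 < Derive a x0 ->
  exists delta, 0 < delta /\ forall t, 0 < t < delta ->
    0 < a (x0 + t) - a x0 /\ 0 < a x0 - a (x0 - t) /\
    0 < Fprim a (x0 + t) - Fprim a x0 - a x0 * t /\
    0 < Fprim a (x0 - t) - Fprim a x0 + a x0 * t.
Proof.
move=> a_der a'_pos.
have a_cont x : continuous a x by apply: ex_derive_continuous.
have [delta [incr_right incr_left]] := Derive_pos_increasing_at a x0 (a_der x0) a'_pos.
exists delta; split=> [|t t_range]; first exact: cond_pos.
split; [have := incr_right (x0 + t); lra|].
split; [have := incr_left (x0 - t); lra|].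
split.
- rewrite Fprim_sub //.
  have := RInt_gt_const a x0 (x0 + t) (a x0) ltac:(lra) (fun z _ => a_cont z)
    (fun z z_range => incr_right z ltac:(lra)).
  rewrite (_ : x0 + t - x0 = t); [lra | ring].
- rewrite (_ : forall F0 F1, F1 - F0 + a x0 * t = a x0 * t - (F0 - F1)); [|move=> *; ring].
  rewrite Fprim_sub //.
  have := RInt_lt_const a (x0 - t) x0 (a x0) ltac:(lra) (fun z _ => a_cont z)
    (fun z z_range => incr_left z ltac:(lra)).
  rewrite (_ : x0 - (x0 - t) = t); [lra | ring].
Qed.

End RealAnalysis.

(* Loaded only now: these [ring] and [lra] shadow the Stdlib tactics used above. *)
From mathcomp Require Import ring lra.
Import Order.TTheory GRing.Theory Num.Theory.
Local Open Scope ring_scope.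

Lemma det_mx22 (R : comNzRingType) (M : 'M[R]_2) :
  \det M = M 0 0 * M 1 1 - M 0 1 * M 1 0.
Proof.
rewrite (expand_det_row _ 0) !big_ord_recl big_ord0 /cofactor !det_mx11 !mxE.
have lift1 (i : 'I_2) : lift i 0 = (if i == 0 then 1 else 0).
  by case: i => [[|[|?]] ?]; apply/val_inj.
rewrite !lift1 /= add0n expr0 (_ : (1 %% 2)%N = 1%N) // expr1; ring.
Qed.

Lemma minor1E (f : 'I_1 -> 'I_3) (g : 'I_1 -> 'I_2) X : minor f g X = X (f 0) (g 0).
Proof. by rewrite /minor det_mx11 mxE. Qed.

Lemma minor2E (f : 'I_2 -> 'I_3) (g : 'I_2 -> 'I_2) X : incr_idx g ->
  minor f g X = X (f 0) 0 * X (f 1) 1 - X (f 0) 1 * X (f 1) 0.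
Proof.
move=> /(_ 0 1 isT) g_incr.
have [g0 g1] : g 0 = 0 /\ g 1 = 1.
  by move: g_incr; case: (g 0) (g 1) => [[|[|?]] ?] [[|[|?]] ?] //= _; split; apply/val_inj.
by rewrite /minor det_mx22 !mxE g0 g1.
Qed.

(* Arguments and bodies of type [R] are parsed in Stdlib's [R_scope] by default;
   [clear scopes] below and the [fun] in [five_weights] keep them in [ring_scope]. *)
Definition model_point (x y A G : R) : 'M[R]_(3, 2) :=
  \matrix_(i < 3, j < 2)
    match nat_of_ord i, nat_of_ord j with
    | 0%N, 0%N => x
    | 0%N, _   => y
    | 1%N, 0%N => A
    | 1%N, _   => x
    | _,   0%N => x * A
    | _,   _   => x ^+ 2 / 2 + G
    end.
Arguments model_point : clear scopes.

Lemma P1_model a al1 al2 u v :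
  P1 a al1 al2 u v = model_point (u - al1) (v - al2) (a v - a al2)
                       (Fprim a v - Fprim a al2 - a al2 * (v - al2)).
Proof.
apply/matrixP => i j; rewrite !mxE.
by case: i j => [[|[|[|?]]] ?] [[|[|?]] ?] //=; ring.
Qed.

Definition model_zetas (s t c1 c2 g1 g2 : R) (j : 'I_5) : 'M[R]_(3, 2) :=
  match nat_of_ord j with
  | 0%N => model_point 0 0 0 0
  | 1%N => model_point s 0 0 0
  | 2%N => model_point (- s) 0 0 0
  | 3%N => model_point 0 t c1 g1
  | _   => model_point 0 (- t) (- c2) g2
  end.
Arguments model_zetas : clear scopes.

Lemma zetasE a al1 al2 s t :
  zetas a al1 al2 s t =1 model_zetas s t (a (al2 + t) - a al2) (a al2 - a (al2 - t))
    (Fprim a (al2 + t) - Fprim a al2 - a al2 * t) (Fprim a (al2 - t) - Fprim a al2 + a al2 * t).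
Proof.
case=> [[|[|[|[|[|?]]]]] ?] //; rewrite /zetas /model_zetas /= P1_model ?RealsE;
  by congr model_point; ring.
Qed.

Lemma zetas_in_K1 a al1 al2 s t j : K1 a al1 al2 (zetas a al1 al2 s t j).
Proof. by rewrite /zetas; case: (nat_of_ord j) => [|[|[|[|?]]]]; do 2 eexists. Qed.

Definition five_weights (eps m p q : R) : 'I_5 -> R := fun j =>
  match nat_of_ord j with
  | 0%N => 1 - eps
  | 1%N | 2%N => m / 2
  | 3%N => p
  | _ => q
  end.

Lemma five_weights_pos eps m p q j : 0 < eps < 1 -> 0 < m -> 0 < p -> 0 < q ->
  0 < five_weights eps m p q j.
Proof.
move=> /andP[eps_pos eps_lt1] m_pos p_pos q_pos.
by case: j => [[|[|[|[|[|?]]]]] ?] //=; rewrite /five_weights /=; lra.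
Qed.

Lemma five_weights_tail eps m p q : m + p + q = eps ->
  \sum_(j < 5 | (0 < j)%N) five_weights eps m p q j = eps.
Proof. by move=> mass; rewrite big_mkcond /= !big_ord_recl big_ord0 /five_weights /=; lra. Qed.

Lemma five_weights_sum eps m p q : m + p + q = eps -> \sum_(j < 5) five_weights eps m p q j = 1.
Proof. by move=> mass; rewrite !big_ord_recl big_ord0 /five_weights /=; lra. Qed.

Lemma model_zetas_null_lagrangian s t c1 c2 g1 g2 eps m p q :
  moment_equations c1 c2 g1 g2 (s * s) t m p q ->
  forall k (f : 'I_k -> 'I_3) (g : 'I_k -> 'I_2), (1 <= k <= 2)%N -> incr_idx f -> incr_idx g ->
  \sum_(j < 5) five_weights eps m p q j * minor f g (model_zetas s t c1 c2 g1 g2 j)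
  = minor f g (\sum_(j < 5) five_weights eps m p q j *: model_zetas s t c1 c2 g1 g2 j).
Proof.
rewrite /moment_equations !RealsE /= => -[eqA eqC] [|[|[|k]]] f g //= _ f_incr g_incr.
  by rewrite minor1E summxE; apply: eq_bigr => j _; rewrite minor1E mxE.
rewrite [RHS]minor2E // !summxE !big_ord_recl !big_ord0 !minor2E //.
move: (f_incr 0 1 isT); case: (f 0) (f 1) => [[|[|[|?]]] ?] [[|[|[|?]]] ?] //= _;
  rewrite /five_weights /model_zetas !mxE /=; lra.
Qed.

Lemma zetas_pc_discrete a al1 al2 s t eps m p q :
  0 < eps < 1 -> 0 < m -> 0 < p -> 0 < q -> m + p + q = eps ->
  moment_equations (a (al2 + t) - a al2) (a al2 - a (al2 - t))
    (Fprim a (al2 + t) - Fprim a al2 - a al2 * t) (Fprim a (al2 - t) - Fprim a al2 + a al2 * t)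
    (s * s) t m p q ->
  pc_discrete (K1 a al1 al2) (five_weights eps m p q) (zetas a al1 al2 s t).
Proof.
move=> eps_range m_pos p_pos q_pos mass eqs.
split; [by move=> j; apply/ltW/five_weights_pos|].
split; [exact: five_weights_sum mass|].
split; [by move=> j _; apply: zetas_in_K1|].
move=> k f g k_range f_incr g_incr.
under eq_bigr do rewrite zetasE.
under [in RHS]eq_bigr do rewrite zetasE.
exact: model_zetas_null_lagrangian.
Qed.

Theorem theorem8 (a : R -> R) (al1 al2 : R) :
  C2 a -> (Derive a al2 > 0) ->
  exists delta : R, (0 < delta) /\
  forall s0 t0 : R, (0 < s0 < delta) -> (0 < t0 < delta) ->
  exists eps0 : R, (0 < eps0 < 1) /\
  forall eps : R, (0 < eps <= eps0) ->
  exists gamma : 'I_5 -> R,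
    (forall j, (0 < gamma j)) /\
    gamma ord0 = (1 - eps) /\
    (\sum_(j < 5 | (0 < j)%N) gamma j) = eps /\
    pc_discrete (K1 a al1 al2) gamma (zetas a al1 al2 s0 t0).
Proof.
move=> [a_derivable _] /RltP a'_pos.
have [delta [delta_pos signs]] := increment_signs a al2 a_derivable a'_pos.
exists delta; split; first exact/RltP.
move=> s0 t0 /andP[/RltP s0_pos _] /andP[/RltP t0_pos /RltP t0_lt].
have [c1_pos [c2_pos [g1_pos g2_pos]]] := signs t0 (conj t0_pos t0_lt).
have s2_pos := Rmult_lt_0_compat _ _ s0_pos s0_pos.
have [eps0 [[eps0_pos eps0_lt1] solvable]] :=
  moment_equations_solvable _ _ _ _ _ _ c1_pos c2_pos g1_pos g2_pos s2_pos t0_pos.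
exists eps0; split; first by apply/andP; split; apply/RltP.
move=> eps /andP[/RltP eps_pos /RleP eps_le].
have [m [p [q [/RltP m_pos [/RltP p_pos [/RltP q_pos [mass eqs]]]]]]] :=
  solvable eps (conj eps_pos eps_le).
have eps_range : 0 < eps < 1 by apply/andP; split; apply/RltP; [|exact: Rle_lt_trans eps_le _].
exists (five_weights eps m p q).
split; first by move=> j; apply: five_weights_pos.
split; first by [].
split; first exact: five_weights_tail mass.
exact: zetas_pc_discrete.
Qed.
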